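(* Let $P$ be a $\sigma$-liminf-centered poset. Then $P$ does not add a dominating real. In fact, $P$ preserves unboundedness of all subsets of $\omega^\omega$: if $F\subset\omega^\omega$ is unbounded in the modulo-finite domination order, then $P$ forces that $F$ remains unbounded.
   Context: For a poset $P$, a set $A\subset P$ is liminf centered if for every sequence $\langle p_i\colon i\in\omega\rangle$ of elements of $A$ there is $q\in P$ such that for every $r\leq q$ the set $\{i\in\omega\colon p_i$ is compatible with $r\}$ is infinite. $P$ is $\sigma$-liminf-centered if it is a countable union of liminf centered sets. A dominating real is an element of $\omega^\omega$ in the extension dominating modulo finite every ground model element of $\omega^\omega$. *)

(* Forcing over a poset is rendered internally via the
   standard combinatorial forcing relation for the (arithmetic in names)
   statements involved. *)

(* A poset (forcing notion): [le p q] means "p is stronger than q" (p <= q). *)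
Record poset := Poset {
  carrier :> Type;
  le : carrier -> carrier -> Prop;
  le_refl : forall p, le p p;
  le_trans : forall p q r, le p q -> le q r -> le p r;
  le_antisym : forall p q, le p q -> le q p -> p = q
}.

Arguments le {_} _ _.

Definition compatible {P : poset} (p q : P) : Prop :=
  exists s : P, le s p /\ le s q.

Definition liminf_centered {P : poset} (A : P -> Prop) : Prop :=
  forall p : nat -> P, (forall i, A (p i)) ->
    exists q : P, forall r : P, le r q ->
      forall N : nat, exists i, N <= i /\ compatible (p i) r.

Definition sigma_liminf_centered (P : poset) : Prop :=
  exists A : nat -> P -> Prop,
    (forall n, liminf_centered (A n)) /\ (forall p : P, exists n, A n p).

Definition le_star (g f : nat -> nat) : Prop :=
  exists N, forall m, N <= m -> g m <= f m.

Definition unbounded (F : (nat -> nat) -> Prop) : Prop :=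
  forall f : nat -> nat, exists g, F g /\ ~ le_star g f.

(* A P-name for an element of ω^ω, given by the relation
   [nm n k p] := "p forces  fdot(n) = k". *)
Record real_name (P : poset) := RealName {
  nm :> nat -> nat -> P -> Prop;
  nm_down : forall n k p q, nm n k p -> le q p -> nm n k q;
  nm_fun : forall n k k' p, nm n k p -> nm n k' p -> k = k';
  nm_dense : forall n (p : P), exists q, le q p /\ exists k, nm n k q
}.

Definition dense_below {P : poset} (q : P) (D : P -> Prop) : Prop :=
  forall r, le r q -> exists r', le r' r /\ D r'.

(* q forces "~ (g <=* fdot)", i.e. q forces "for all N there is m >= N
   with fdot(m) < g(m)". *)
Definition forces_not_le_star {P : poset} (q : P) (g : nat -> nat)
    (f : real_name P) : Prop :=
  forall N : nat, dense_below q (fun r =>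
    exists m k, N <= m /\ f m k r /\ k < g m).

Definition forces_unbounded (P : poset) (F : (nat -> nat) -> Prop) : Prop :=
  forall (f : real_name P) (p : P),
    exists q, le q p /\ exists g, F g /\ forces_not_le_star q g f.

Definition adds_no_dominating_real (P : poset) : Prop :=
  forall (f : real_name P) (p : P),
    exists q, le q p /\ exists g : nat -> nat, forces_not_le_star q g f.

(* For a liminf centered set A and a coordinate m,
   some k is such that no condition of A forces f(m) > k: otherwise pick p_k in
   A forcing f(m) > k, let q witness liminf centeredness for (p_k), and extend q
   to some r deciding f(m) = j; r is compatible with some p_i with i >= j, and a
   common extension forces both f(m) = j and f(m) > i >= j.  Writing
   P = U_n A_n and letting h(m) bound the A_0, ..., A_m at coordinate m, h is a
   ground-model real such that every g with g not <=* h is forced not to be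
   dominated by f: below r in A_n, take m >= N, n with h(m) < g(m); since r does
   not force f(m) > h(m), some extension of r decides f(m) <= h(m) < g(m). *)

From Stdlib Require Import ClassicalEpsilon PeanoNat Lia.

Lemma not_le_star_frequently (g h : nat -> nat) :
  ~ le_star g h -> forall N, exists m, N <= m /\ h m < g m.
Proof.
  intros Hgh N. apply NNPP; intro Hnone. apply Hgh. exists N. intros m Hm.
  apply Nat.nlt_ge; intro Hlt. apply Hnone. exists m. split; assumption.
Qed.

Section BoundingNames.

Variable P : poset.
Variable f : real_name P.

Definition forces_gt (a : P) (m k : nat) : Prop :=
  dense_below a (fun s => exists j, f m j s /\ k < j).

Lemma forces_gt_le (a : P) (m k k' : nat) :
  k <= k' -> forces_gt a m k' -> forces_gt a m k.
Proof.
  intros Hk Ha r Hr. destruct (Ha r Hr) as [s [Hsr [j [Hj Hlt]]]].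
  exists s. split; [assumption|]. exists j. split; [assumption | lia].
Qed.

Lemma not_forces_gt (a : P) (m k : nat) :
  ~ forces_gt a m k -> exists s j, le s a /\ f m j s /\ j <= k.
Proof.
  intro Hna. apply NNPP; intro Hnone. apply Hna. intros r Hr.
  destruct (nm_dense P f m r) as [s [Hsr [j Hj]]].
  exists s. split; [assumption|]. exists j. split; [assumption|].
  apply Nat.nle_gt; intro Hjk. apply Hnone.
  exists s, j. split; [eapply le_trans; eassumption | split; assumption].
Qed.

Lemma liminf_centered_bound (A : P -> Prop) (m : nat) :
  liminf_centered A -> exists k, forall a, A a -> ~ forces_gt a m k.
Proof.
  intro HA. apply NNPP; intro Hnone.
  assert (Hforce : forall k, exists a, A a /\ forces_gt a m k).
  { intro k. apply NNPP; intro Hk. apply Hnone. exists k. intros a Ha Hgt.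
    apply Hk. exists a. split; assumption. }
  destruct (choice _ Hforce) as [p Hp].
  destruct (HA p (fun k => proj1 (Hp k))) as [q Hq].
  destruct (nm_dense P f m q) as [r [Hrq [j Hj]]].
  destruct (Hq r Hrq j) as [i [Hji [s [Hsp Hsr]]]].
  destruct (proj2 (Hp i) s Hsp) as [s' [Hs's [j' [Hj' Hij']]]].
  assert (j = j').
  { apply (nm_fun P f m j j' s'); [|assumption].
    apply (nm_down P f m j r); [|eapply le_trans]; eassumption. }
  lia.
Qed.

Lemma liminf_centered_bound_upto (A : nat -> P -> Prop) (m M : nat) :
  (forall n, liminf_centered (A n)) ->
  exists k, forall n a, n <= M -> A n a -> ~ forces_gt a m k.
Proof.
  intro HA. induction M as [|M [k IH]].
  - destruct (liminf_centered_bound (A 0) m (HA 0)) as [k Hk].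
    exists k. intros n a Hn. replace n with 0 by lia. apply Hk.
  - destruct (liminf_centered_bound (A (S M)) m (HA (S M))) as [k' Hk'].
    exists (Nat.max k k'). intros n a Hn Ha Hgt.
    destruct (Nat.eq_dec n (S M)) as [-> | HnM].
    + apply (Hk' a Ha). eapply forces_gt_le; [|exact Hgt]. lia.
    + apply (IH n a); [lia | assumption |].
      eapply forces_gt_le; [|exact Hgt]. lia.
Qed.

Lemma sigma_liminf_centered_name_bounded :
  sigma_liminf_centered P ->
  exists h : nat -> nat, forall g, ~ le_star g h ->
    forall p : P, forces_not_le_star p g f.
Proof.
  intros [A [HA Hcover]].
  destruct (choice _ (fun m => liminf_centered_bound_upto A m m HA)) as [h Hh].
  exists h. intros g Hgh p N r _.
  destruct (Hcover r) as [n Hn].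
  destruct (not_le_star_frequently g h Hgh (Nat.max N n)) as [m [Hm Hhg]].
  destruct (not_forces_gt r m (h m)) as [s [j [Hsr [Hj Hjh]]]].
  { apply (Hh m n r); [lia | assumption]. }
  exists s. split; [assumption|]. exists m, j. repeat split; [lia | assumption | lia].
Qed.

End BoundingNames.

Theorem theorem3p8 (P : poset) :
  sigma_liminf_centered P ->
  adds_no_dominating_real P /\
  (forall F : (nat -> nat) -> Prop, unbounded F -> forces_unbounded P F).
Proof.
  intro HP. split.
  - intros f p. destruct (sigma_liminf_centered_name_bounded P f HP) as [h Hh].
    exists p. split; [apply le_refl|]. exists (fun m => S (h m)).
    apply Hh. intros [N HN]. specialize (HN N (le_n N)). lia.
  - intros F HF f p. destruct (sigma_liminf_centered_name_bounded P f HP) as [h Hh].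
    destruct (HF h) as [g [HFg Hgh]].
    exists p. split; [apply le_refl|]. exists g. split; [assumption | apply Hh, Hgh].
Qed.
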